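(* Under the hypotheses of theorem:ConvergenceRatesSparsityFull (with $1\le p\le2$), one has $\|s^\alpha-s^\ast\|=\mathcal{O}(\sqrt{\delta+\epsilon})$ as $\delta+\epsilon\to0$.
   Context: The hypotheses are: sparsity setting with $X,Y,Z$ Hilbert spaces, $B:X\times Y\to Z$ bilinear with $\|B(c,s)\|\le C\|c\|\|s\|$ and sequentially weak-weak continuous, $P:Y\to Y_n\subset Y$ linear bounded ($Y_n$ finite-dimensional), $s_{\mathrm{calib}}\in Y_n$, $\mathcal{R}_s:Y\to[0,\infty)$ proper convex weakly lower semi-continuous, $\{\varphi_i\}$ an orthonormal basis of $X$, $1\le w_i<\infty$, $\Phi_p(c)=\sum_iw_i|\langle c,\varphi_i\rangle|^p$, fixed $\gamma>0$, $\nu_1,\nu_2>0$, $\tilde{\mathcal{R}}(c,s)=\Phi_p(c)+\frac{\nu_2}{2}\|P(s)-s_{\mathrm{calib}}\|^2+\nu_1\mathcal{R}_s(s)$, $J^{u,s_m}_{\alpha,\beta,\mu}(c,s)=\frac12\|B(c,s)-u\|^2+\frac{\gamma}{2}\|s-s_m\|^2+\frac{\mu}{2}\|P(s)-s_{\mathrm{calib}}\|^2+\alpha\Phi_p(c)+\beta\mathcal{R}_s(s)$; $u^\ast=B(c^\ast,s^\ast)$ with $c^\ast\in\arg\min\{\Phi_p(c):B(c,s^\ast)=u^\ast\}$ and $\Phi_p(c^\ast)<\infty$; $\|u^\ast-u_\delta\|\le\delta$, $\|s^\ast-s_{\mathrm{mod},\epsilon}\|\le\epsilon$; there exist $\kappa_1\in[0,1)$,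 $\kappa_2\ge0$, $0\le\kappa_3<\min\{1,\gamma/(2\alpha_{\max})\}$, $\xi^\ast\in\partial\tilde{\mathcal{R}}(c^\ast,s^\ast)$ with $\langle\xi^\ast,(c^\ast-c,s^\ast-s)\rangle\le\kappa_1D^{\xi^\ast}_{\tilde{\mathcal{R}}}((c,s),(c^\ast,s^\ast))+\kappa_2\|B(c,s)-B(c^\ast,s^\ast)\|+\kappa_3\|s-s^\ast\|^2$ for all $(c,s)$, where $D^{\xi}_{\mathcal{R}}(x,x^\ast)=\mathcal{R}(x)-\mathcal{R}(x^\ast)-\langle\xi,x-x^\ast\rangle$; $(c^\alpha,s^\alpha)$ minimizes $J^{u_\delta,s_{\mathrm{mod},\epsilon}}_{\alpha,\nu_1\alpha,\nu_2\alpha}$, $0<\alpha\le\alpha_{\max}$, and $m(\delta+\epsilon)\le\alpha\le M(\delta+\epsilon)$ for constants $0<m\le M$. *)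

From HB Require Import structures.
From mathcomp Require Import all_boot all_order all_algebra.
From mathcomp Require Import all_classical all_reals all_analysis.
Set Implicit Arguments. Unset Strict Implicit. Unset Printing Implicit Defensive.
Import Order.TTheory GRing.Theory Num.Theory.
Import numFieldNormedType.Exports.
Local Open Scope classical_set_scope.
Local Open Scope ring_scope.

(* [ip] is an inner product on the normed space [X] inducing its norm.
   Together with completeness (completeNormedModType) this makes X a
   real Hilbert space. *)
Definition inner_product (R : realType) (X : normedModType R)
    (ip : X -> X -> R) : Prop :=
  [/\ forall x y, ip x y = ip y x,
      forall (a : R) (x y z : X), ip (a *: x + y) z = a * ip x z + ip y z &
      forall x, `|x| ^+ 2 = ip x x].

Definition weak_cvg (R : realType) (X : normedModType R)
    (ip : X -> X -> R) (u : nat -> X) (x : X) : Prop :=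
  forall y, ip (u n) y @[n --> \oo] --> ip x y.

Definition orthonormal_basis (R : realType) (X : normedModType R)
    (ip : X -> X -> R) (phi : nat -> X) : Prop :=
  (forall i j, ip (phi i) (phi j) = if i == j then 1 else 0) /\
  (forall x, (forall i, ip x (phi i) = 0) -> x = 0).

Definition Phi_p (R : realType) (X : normedModType R)
    (ip : X -> X -> R) (phi : nat -> X) (w : nat -> R) (p : R) (c : X)
    : \bar R :=
  (\sum_(i <oo) ((w i * `|ip c (phi i)| `^ p)%:E))%E.

Definition bilinear_map (R : realType) (X Y Z : normedModType R)
    (B : X -> Y -> Z) : Prop :=
  (forall (a : R) c c' s, B (a *: c + c') s = a *: B c s + B c' s) /\
  (forall (a : R) c s s', B c (a *: s + s') = a *: B c s + B c s').

Definition seq_weak_weak_continuous (R : realType) (X Y Z : normedModType R)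
    (ipX : X -> X -> R) (ipY : Y -> Y -> R) (ipZ : Z -> Z -> R)
    (B : X -> Y -> Z) : Prop :=
  forall (cn : nat -> X) (sn : nat -> Y) c s,
    weak_cvg ipX cn c -> weak_cvg ipY sn s ->
    weak_cvg ipZ (fun n => B (cn n) (sn n)) (B c s).

Definition linear_bounded (R : realType) (Y : normedModType R)
    (P : Y -> Y) : Prop :=
  (forall (a : R) x y, P (a *: x + y) = a *: P x + P y) /\
  exists C : R, forall y, `|P y| <= C * `|y|.

Definition finite_dim_subspace (R : realType) (Y : normedModType R)
    (Yn : set Y) : Prop :=
  exists (n : nat) (b : 'I_n -> Y),
    Yn = [set y | exists a : 'I_n -> R, y = \sum_(i < n) a i *: b i].

Definition convex_realfun (R : realType) (Y : normedModType R)
    (f : Y -> R) : Prop :=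
  forall x y (t : R), 0 <= t <= 1 ->
    f (t *: x + (1 - t) *: y) <= t * f x + (1 - t) * f y.

Definition weakly_lsc (R : realType) (Y : normedModType R)
    (ip : Y -> Y -> R) (f : Y -> R) : Prop :=
  forall (u : nat -> Y) x, weak_cvg ip u x ->
    ((f x)%:E <= limn_einf (fun n => (f (u n))%:E))%E.

Definition Rtilde (R : realType) (X Y : normedModType R)
    (ipX : X -> X -> R) (phi : nat -> X) (w : nat -> R) (p : R)
    (P : Y -> Y) (scal : Y) (Rs : Y -> R) (nu1 nu2 : R) (c : X) (s : Y)
    : \bar R :=
  (Phi_p ipX phi w p c + ((nu2 / 2) * `|P s - scal| ^+ 2 + nu1 * Rs s)%:E)%E.

(* duality pairing on X x Y (identified with its dual via Riesz) *)
Definition pairXY (R : realType) (X Y : normedModType R)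
    (ipX : X -> X -> R) (ipY : Y -> Y -> R) (xi : X * Y) (v : X * Y) : R :=
  ipX xi.1 v.1 + ipY xi.2 v.2.

Definition Jfun (R : realType) (X Y Z : normedModType R)
    (ipX : X -> X -> R) (phi : nat -> X) (w : nat -> R) (p : R)
    (B : X -> Y -> Z) (P : Y -> Y) (scal : Y) (Rs : Y -> R) (gamma : R)
    (u : Z) (sm : Y) (alpha beta mu : R) (c : X) (s : Y) : \bar R :=
  ((1 / 2 * `|B c s - u| ^+ 2 + gamma / 2 * `|s - sm| ^+ 2
     + mu / 2 * `|P s - scal| ^+ 2)%:E
   + alpha%:E * Phi_p ipX phi w p c + (beta * Rs s)%:E)%E.

From HB Require Import structures.
From mathcomp Require Import all_boot all_order all_algebra.
From mathcomp Require Import all_classical all_reals all_analysis.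
From mathcomp Require Import ring lra.
Import Order.TTheory GRing.Theory Num.Theory.
Import numFieldNormedType.Exports.
Local Open Scope classical_set_scope.
Local Open Scope ring_scope.

(* Only the minimality of (c^alpha, s^alpha), the subgradient
   property of xi and the source condition enter.

   Suppose, with
      r = ||B(c^a,s^a) - u_delta||, t = ||s^a - s_mod||, v = ||s^a - sstar||,
        r^2/2 + gamma t^2/2
          <= delta^2/2 + gamma eps^2/2 + alpha (k2 b + k3 v^2),
      where b <= r + delta and v <= t + eps.  The term alpha k3 v^2 is
      absorbed into gamma t^2/2 because k3 alpha_max < gamma/2, a Young
      inequality absorbs the cross term, and alpha <= M (delta + eps) with
      delta + eps <= 1 turns the rest into O(delta + eps); so v = O(sqrt).
   2. Energy inequality (section EnergyInequality).  Comparing the Tikhonov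
      functional at the minimiser with its value at (cstar, sstar), and
      bounding the regulariser increase from below by the source condition
      (the Bregman distance being nonnegative as xi is a subgradient),
      yields exactly the hypothesis of part 1 with b = ||B(c^a,s^a) - u*||. *)

Lemma young_absorb {R : realFieldType} {q g e v c : R} :
  0 < q -> q * v ^+ 2 <= g * e * v + c ->
  q / 2 * v ^+ 2 <= c + g ^+ 2 * e ^+ 2 / (2 * q).
Proof.
move=> q0 hv.
have young : g * e * v <= q / 2 * v ^+ 2 + g ^+ 2 * e ^+ 2 / (2 * q).
  rewrite -(ler_pM2r (_ : 0 < 2 * q)); last by lra.
  have -> : (q / 2 * v ^+ 2 + g ^+ 2 * e ^+ 2 / (2 * q)) * (2 * q)
            = (q * v) ^+ 2 + (g * e) ^+ 2 by field; lra.
  have := sqr_ge0 (q * v - g * e); rewrite sqrrB; nra.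
lra.
Qed.

Section RateArithmetic.

Context {R : realType}.
Variables (g k2 k3 amax M : R).

(* q = gamma/2 - k3 alpha_max: the part of gamma/2 left after absorbing
   the k3 term of the source condition. *)
Definition rate_margin : R := g / 2 - k3 * amax.

Definition rate_factor : R :=
  1 / 2 + M ^+ 2 * k2 ^+ 2 / 2 + M * k2 + g ^+ 2 / (2 * rate_margin).

Definition rate_constant : R :=
  Num.sqrt (2 / rate_margin * rate_factor) + 1.

Hypotheses (g_gt0 : 0 < g) (k2_ge0 : 0 <= k2) (k3_ge0 : 0 <= k3)
  (M_gt0 : 0 < M) (margin_gt0 : 0 < rate_margin).

Lemma rate_factor_ge0 : 0 <= rate_factor.
Proof.
have q0 := margin_gt0.
have g2q_ge0 : 0 <= g ^+ 2 / (2 * rate_margin).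
  by apply: divr_ge0; [exact: sqr_ge0 | lra].
have Mk2_sq_ge0 := mulr_ge0 (sqr_ge0 M) (sqr_ge0 k2).
have Mk2_ge0 := mulr_ge0 (ltW M_gt0) k2_ge0.
rewrite /rate_factor; lra.
Qed.

Lemma energy_quadratic_bound {d e a r t v b : R} :
  0 <= a -> a <= amax -> 0 <= r -> 0 <= t -> e <= v ->
  b <= r + d -> v <= t + e ->
  r ^+ 2 / 2 + g * t ^+ 2 / 2
    <= d ^+ 2 / 2 + g * e ^+ 2 / 2 + a * (k2 * b + k3 * v ^+ 2) ->
  rate_margin * v ^+ 2
    <= g * e * v + (d ^+ 2 / 2 + (a * k2) ^+ 2 / 2 + a * k2 * d).
Proof.
move=> a0 aam r0 t0 ev bb vt energy.
have absorb_k3 : a * k3 * v ^+ 2 <= (g / 2 - rate_margin) * v ^+ 2.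
  have -> : g / 2 - rate_margin = amax * k3 by rewrite /rate_margin; ring.
  by rewrite ler_wpM2r ?sqr_ge0 // ler_wpM2r.
have shift_t : (v - e) ^+ 2 <= t ^+ 2 by rewrite ler_sqr ?nnegrE; lra.
have bound_b : a * k2 * b <= a * k2 * r + a * k2 * d.
  by rewrite -mulrDr ler_wpM2l // mulr_ge0.
have young_r : a * k2 * r - r ^+ 2 / 2 <= (a * k2) ^+ 2 / 2.
  have := sqr_ge0 (a * k2 - r); lra.
have := ler_wpM2l (ltW g_gt0) shift_t; nra.
Qed.

Lemma noise_terms_bound {d e a : R} :
  0 <= d -> 0 <= e -> d + e <= 1 -> 0 <= a -> a <= M * (d + e) ->
  d ^+ 2 / 2 + (a * k2) ^+ 2 / 2 + a * k2 * d
    + g ^+ 2 * e ^+ 2 / (2 * rate_margin) <= rate_factor * (d + e).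
Proof.
move=> d0 e0 de1 a0 aM; have q0 := margin_gt0; have M0 := M_gt0.
have hd : d ^+ 2 <= d + e by nra.
have he : e ^+ 2 <= d + e by nra.
have ha : a ^+ 2 <= M ^+ 2 * (d + e).
  have : a ^+ 2 <= (M * (d + e)) ^+ 2 by rewrite ler_sqr ?nnegrE //; nra.
  move/le_trans; apply; rewrite exprMn ler_wpM2l ?sqr_ge0 //.
  by rewrite expr2 ler_piMr //; lra.
have hk : (a * k2) ^+ 2 <= M ^+ 2 * k2 ^+ 2 * (d + e).
  by rewrite mulrAC exprMn ler_wpM2r ?sqr_ge0.
have had : a * k2 * d <= M * k2 * (d + e).
  rewrite mulrAC [M * k2 * _]mulrAC ler_wpM2r //; nra.
have hge : g ^+ 2 * e ^+ 2 / (2 * rate_margin)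
           <= g ^+ 2 / (2 * rate_margin) * (d + e).
  rewrite mulrAC ler_wpM2l //; apply: divr_ge0; [exact: sqr_ge0 | lra].
rewrite /rate_factor; lra.
Qed.

Lemma rate_estimate (d e a r t v b : R) :
  0 <= d -> 0 <= e -> d + e <= 1 -> 0 < a -> a <= amax -> a <= M * (d + e) ->
  0 <= r -> 0 <= t -> 0 <= v -> b <= r + d -> v <= t + e ->
  r ^+ 2 / 2 + g * t ^+ 2 / 2
    <= d ^+ 2 / 2 + g * e ^+ 2 / 2 + a * (k2 * b + k3 * v ^+ 2) ->
  v <= rate_constant * Num.sqrt (d + e).
Proof.
move=> d0 e0 de1 a0 aam aM r0 t0 v0 bb vt energy; have q0 := margin_gt0.
have sqrt_ge0 := sqrtr_ge0 (d + e).
have K0 := sqrtr_ge0 (2 / rate_margin * rate_factor).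
rewrite /rate_constant mulrDl mul1r.
have [ev | ve] := lerP e v; last first.
  (* v < e <= sqrt (d + e), since d + e <= 1 *)
  have s1 : Num.sqrt (d + e) <= 1 by rewrite -sqrtr1 ler_sqrt //; lra.
  have sq : d + e = Num.sqrt (d + e) ^+ 2 by rewrite sqr_sqrtr //; lra.
  have : Num.sqrt (d + e) ^+ 2 <= Num.sqrt (d + e) by rewrite expr2 ler_piMr.
  have := mulr_ge0 K0 sqrt_ge0; lra.
have quad := energy_quadratic_bound (ltW a0) aam r0 t0 ev bb vt energy.
have v2 : v ^+ 2 <= 2 / rate_margin * rate_factor * (d + e).
  rewrite -mulrA -(ler_pM2l (_ : 0 < rate_margin / 2)); last by lra.
  have -> : rate_margin / 2 * (2 / rate_margin * (rate_factor * (d + e)))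
            = rate_factor * (d + e) by field; lra.
  apply: le_trans (young_absorb margin_gt0 quad) _.
  exact: noise_terms_bound (ltW a0) aM.
have : Num.sqrt (v ^+ 2) <= Num.sqrt (2 / rate_margin * rate_factor * (d + e)).
  by rewrite ler_sqrt // !mulr_ge0 ?rate_factor_ge0 ?invr_ge0 //; lra.
rewrite sqrtr_sqr ger0_norm // sqrtrM; last first.
  by apply: mulr_ge0; [apply: divr_ge0; lra | exact: rate_factor_ge0].
lra.
Qed.

End RateArithmetic.

Arguments rate_estimate {R g k2 k3 amax M} _ _ _ _ _ {d e a r t v b}.

Lemma inner_product_oppr {R : realType} {X : normedModType R}
    {ip : X -> X -> R} :
  inner_product ip -> forall x y, ip x (- y) = - ip x y.
Proof.
case=> sym lin _ x y.
have ip0 : ip 0 x = 0.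
  have := lin 1 0 0 x; rewrite scale1r addr0 mul1r => h.
  by apply: (addrI (ip 0 x)); rewrite addr0 -h.
have := lin (-1) y 0 x; rewrite addr0 scaleN1r ip0 addr0 mulN1r => ip_oppl.
by rewrite sym ip_oppl sym.
Qed.

Lemma pairXY_opp (R : realType) (X Y : normedModType R)
    (ipX : X -> X -> R) (ipY : Y -> Y -> R) (xi : X * Y) (c c' : X) (s s' : Y) :
  inner_product ipX -> inner_product ipY ->
  pairXY ipX ipY xi (c' - c, s' - s) = - pairXY ipX ipY xi (c - c', s - s').
Proof.
move=> hX hY; rewrite /pairXY /= -(opprB c) -(opprB s).
by rewrite (inner_product_oppr hX) (inner_product_oppr hY) opprD.
Qed.

Lemma Phi_p_ge0 {R : realType} {X : normedModType R} (ip : X -> X -> R)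
  (phi : nat -> X) (w : nat -> R) (p : R) (c : X) :
  (forall i, 0 <= w i) -> (0 <= Phi_p ip phi w p c)%E.
Proof.
move=> w0; apply: nneseries_ge0 => n _ _.
by rewrite lee_fin mulr_ge0 ?powR_ge0.
Qed.

Lemma ge0_ltoo_EFin {R : realType} {x : \bar R} :
  (0 <= x)%E -> (x < +oo)%E -> exists r : R, x = r%:E.
Proof. by case: x => // r; exists r. Qed.

(* Subgradient and source condition combined: the subgradient inequality
   S + pi <= T (nonnegative Bregman distance) and the source condition
   -pi <= k1 (T - S - pi) + E give the lower bound T - S >= -E on the
   increase of the regulariser. *)
Lemma source_condition_lower_bound {R : realDomainType} {k1 S T pi E : R} :
  0 <= k1 <= 1 -> S + pi <= T -> - pi <= k1 * (T - S - pi) + E -> - E <= T - S.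
Proof.
case/andP=> k10 k11 breg src.
have bregman_ge0 : 0 <= T - S - pi by lra.
by have := mulr_ge0 (ltac:(lra) : 0 <= 1 - k1) bregman_ge0; nra.
Qed.

Section EnergyInequality.

Context {R : realType} {X Y Z : normedModType R}.
Context {ipX : X -> X -> R} {ipY : Y -> Y -> R} {B : X -> Y -> Z} {P : Y -> Y}.
Context {scal : Y} {Rs : Y -> R} {phi : nat -> X} {w : nat -> R}.
Context {p gamma nu1 nu2 kappa1 kappa2 kappa3 : R} {cstar : X} {sstar : Y}.
Context {xi : X * Y}.

Let Phi := Phi_p ipX phi w p.
Let Rt := Rtilde ipX phi w p P scal Rs nu1 nu2.
Let J ud smod alpha := Jfun ipX phi w p B P scal Rs gamma ud smod
                          alpha (nu1 * alpha) (nu2 * alpha).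

Hypotheses (ipXh : inner_product ipX) (ipYh : inner_product ipY).
Hypotheses (w_ge0 : forall i, 0 <= w i) (Phi_cstar_fin : (Phi cstar < +oo)%E).
Let Phi_ge0 c : (0 <= Phi c)%E := Phi_p_ge0 ipX phi w p c w_ge0.

Hypotheses (gamma_ge0 : 0 <= gamma) (kappa1_bnd : 0 <= kappa1 <= 1).
Hypothesis subgrad : forall c s,
  (Rt cstar sstar + (pairXY ipX ipY xi (c - cstar, s - sstar))%:E <= Rt c s)%E.
Hypothesis source : forall c s,
  ((pairXY ipX ipY xi (cstar - c, sstar - s))%:E
   <= kappa1%:E * (Rt c s - Rt cstar sstar
                   - (pairXY ipX ipY xi (c - cstar, s - sstar))%:E)
      + (kappa2 * `|B c s - B cstar sstar| + kappa3 * `|s - sstar| ^+ 2)%:E)%E.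

(* A point whose Tikhonov value does not exceed that of (cstar, sstar) has
   finite sparsity penalty: otherwise its functional value would be +oo. *)
Lemma Phi_fin_of_J_le {ud smod alpha ca sa} :
  0 < alpha -> (J ud smod alpha ca sa <= J ud smod alpha cstar sstar)%E ->
  exists pa : R, Phi ca = pa%:E.
Proof.
move=> a0 Jle; have [ps Eps] := ge0_ltoo_EFin (Phi_ge0 cstar) Phi_cstar_fin.
apply: ge0_ltoo_EFin; first exact: Phi_ge0.
move: Jle; rewrite /J /Jfun -/Phi Eps.
case: (Phi ca) => [r _ | | //]; first exact: ltry.
by rewrite mulry gtr0_sg ?mul1e // -!EFinM -!EFinD.
Qed.

Lemma minimizer_energy_inequality {delta eps alpha : R} {ud : Z} {smod : Y}
    {ca : X} {sa : Y} :
  0 < alpha -> `|B cstar sstar - ud| <= delta -> `|sstar - smod| <= eps ->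
  (J ud smod alpha ca sa <= J ud smod alpha cstar sstar)%E ->
  `|B ca sa - ud| ^+ 2 / 2 + gamma * `|sa - smod| ^+ 2 / 2
    <= delta ^+ 2 / 2 + gamma * eps ^+ 2 / 2
       + alpha * (kappa2 * `|B ca sa - B cstar sstar|
                  + kappa3 * `|sa - sstar| ^+ 2).
Proof.
move=> a0 hu hs Jle.
have [pa Epa] := Phi_fin_of_J_le a0 Jle.
have [ps Eps] := ge0_ltoo_EFin (Phi_ge0 cstar) Phi_cstar_fin.
move: Jle (subgrad ca sa) (source ca sa).
rewrite /J /Rt /Jfun /Rtilde -/Phi Epa Eps -!EFinM -!EFinD !lee_fin.
rewrite pairXY_opp // => Jle breg src.
have lower := source_condition_lower_bound kappa1_bnd breg src.
have hu2 : `|B cstar sstar - ud| ^+ 2 <= delta ^+ 2.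
  by rewrite ler_sqr ?nnegrE ?(le_trans (normr_ge0 _) hu).
have hs2 : `|sstar - smod| ^+ 2 <= eps ^+ 2.
  by rewrite ler_sqr ?nnegrE ?(le_trans (normr_ge0 _) hs).
have := ler_wpM2l (ltW a0) lower; have := ler_wpM2l gamma_ge0 hs2.
lra.
Qed.

End EnergyInequality.

Theorem mainTheorem14
  (R : realType) (X Y Z : completeNormedModType R)
  (ipX : X -> X -> R) (ipY : Y -> Y -> R) (ipZ : Z -> Z -> R)
  (B : X -> Y -> Z) (C : R) (P : Y -> Y) (Yn : set Y) (scal : Y)
  (Rs : Y -> R) (phi : nat -> X) (w : nat -> R) (p gamma nu1 nu2 : R)
  (cstar : X) (sstar : Y) (kappa1 kappa2 kappa3 amax m M : R) (xi : X * Y) :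
  inner_product ipX -> inner_product ipY -> inner_product ipZ ->
  bilinear_map B ->
  (forall c s, `|B c s| <= C * `|c| * `|s|) ->
  seq_weak_weak_continuous ipX ipY ipZ B ->
  linear_bounded P -> finite_dim_subspace Yn ->
  (forall y, Yn (P y)) -> Yn scal ->
  (forall y, 0 <= Rs y) -> convex_realfun Rs -> weakly_lsc ipY Rs ->
  orthonormal_basis ipX phi ->
  (forall i, 1 <= w i) ->
  1 <= p <= 2 ->
  0 < gamma -> 0 < nu1 -> 0 < nu2 ->
  (* cstar is a Phi_p-minimizing solution of B(c, sstar) = ustar := B(cstar, sstar) *)
  (forall c, B c sstar = B cstar sstar ->
     (Phi_p ipX phi w p cstar <= Phi_p ipX phi w p c)%E) ->
  (Phi_p ipX phi w p cstar < +oo)%E ->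
  0 < amax ->
  (* source condition *)
  0 <= kappa1 < 1 -> 0 <= kappa2 ->
  0 <= kappa3 -> kappa3 < Num.min 1 (gamma / (2 * amax)) ->
  (forall c s,
     (Rtilde ipX phi w p P scal Rs nu1 nu2 cstar sstar
        + (pairXY ipX ipY xi (c - cstar, s - sstar))%:E
      <= Rtilde ipX phi w p P scal Rs nu1 nu2 c s)%E) ->
  (forall c s,
     ((pairXY ipX ipY xi (cstar - c, sstar - s))%:E
      <= kappa1%:E *
           (Rtilde ipX phi w p P scal Rs nu1 nu2 c s
            - Rtilde ipX phi w p P scal Rs nu1 nu2 cstar sstar
            - (pairXY ipX ipY xi (c - cstar, s - sstar))%:E)
         + (kappa2 * `|B c s - B cstar sstar| + kappa3 * `|s - sstar| ^+ 2)%:E)%E) ->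
  0 < m -> m <= M ->
  exists K eta : R, 0 < eta /\
    forall (delta eps : R) (udelta : Z) (smod : Y) (alpha : R)
           (ca : X) (sa : Y),
      0 <= delta -> 0 <= eps -> delta + eps < eta ->
      `|B cstar sstar - udelta| <= delta ->
      `|sstar - smod| <= eps ->
      0 < alpha <= amax ->
      m * (delta + eps) <= alpha <= M * (delta + eps) ->
      (forall c s,
         (Jfun ipX phi w p B P scal Rs gamma udelta smod
               alpha (nu1 * alpha) (nu2 * alpha) ca sa
          <= Jfun ipX phi w p B P scal Rs gamma udelta smod
               alpha (nu1 * alpha) (nu2 * alpha) c s)%E) ->
      `|sa - sstar| <= K * Num.sqrt (delta + eps).
Proof.
move=> ipXh ipYh _ _ _ _ _ _ _ _ _ _ _ _ w_ge1 _ g0 _ _ _ Phi_fin amax0.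
move=> /andP[k10 k11] k20 k30 k3lt subgrad source m0 mM.
have M0 : 0 < M by lra.
have margin0 : 0 < rate_margin gamma kappa3 amax.
  move: k3lt; rewrite lt_min => /andP[_]; rewrite ltr_pdivlMr /rate_margin; lra.
have k1_bnd : 0 <= kappa1 <= 1 by rewrite k10 ltW.
have w_ge0 i : 0 <= w i := le_trans ler01 (w_ge1 i).
exists (rate_constant gamma kappa2 kappa3 amax M), 1; split => //.
move=> delta eps ud smod alpha ca sa d0 e0 de1 hu hs.
move=> /andP[a0 aam] /andP[_ aM] Jmin.
have energy := minimizer_energy_inequality ipXh ipYh w_ge0 Phi_fin (ltW g0)
  k1_bnd subgrad source a0 hu hs (Jmin cstar sstar).
have dist_B : `|B ca sa - B cstar sstar| <= `|B ca sa - ud| + delta.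
  by rewrite (le_trans (ler_distD ud _ _)) // lerD2l distrC.
have dist_s : `|sa - sstar| <= `|sa - smod| + eps.
  by rewrite (le_trans (ler_distD smod _ _)) // lerD2l distrC.
exact: (rate_estimate g0 k20 k30 M0 margin0 d0 e0 (ltW de1) a0 aam aM
          (normr_ge0 _) (normr_ge0 _) (normr_ge0 _) dist_B dist_s energy).
Qed.
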